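(* Let $G$ be a countably infinite group and $C<G$ a finite cyclic subgroup of prime order, with normalizer $N(C)=\{g\in G: gCg^{-1}=C\}$. Let $(K,\kappa)$ be a nontrivial standard probability space. If $G/N(C)$ is infinite, then the action $G\curvearrowright (K^{G/C},\kappa^{G/C})$ is essentially free.
   Context: $(K^{G/C},\kappa^{G/C})$ is the product space of maps $x:G/C\to K$ with product measure, and $G$ acts by $(gx)(fC)=x(g^{-1}fC)$ (the generalized Bernoulli shift over $G/C$). Nontrivial means $\kappa$ is not concentrated on a single point. Essentially free means that for every $g\ne e$, the set $\{x: gx=x\}$ has measure zero. *)

From HB Require Import structures.
From mathcomp Require Import all_boot all_order all_algebra.
From mathcomp Require Import all_classical all_reals all_analysis.

Set Implicit Arguments.
Unset Strict Implicit.
Unset Printing Implicit Defensive.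

Import Order.TTheory GRing.Theory Num.Theory.
Local Open Scope classical_set_scope.

Definition lcoset (G : groupType) (g : G) (A : set G) : set G :=
  [set (g * a)%g | a in A].

Definition conjset (G : groupType) (g : G) (A : set G) : set G :=
  [set (g * a * g^-1)%g | a in A].

Definition is_subgroup (G : groupType) (H : set G) : Prop :=
  [/\ H 1%g, (forall x y, H x -> H y -> H (x * y)%g) & (forall x, H x -> H (x^-1)%g)].

Definition normalizer (G : groupType) (C : set G) : set G :=
  [set g | conjset g C = C].

Definition left_cosets (G : groupType) (H : set G) : set (set G) :=
  [set A | exists g, A = lcoset g H].

Definition coset_space (G : groupType) (H : set G) : Type :=
  {A : set G | left_cosets H A}.

Lemma lcoset_left_cosets (G : groupType) (H : set G) (g : G) (A : set G) :
  left_cosets H A -> left_cosets H (lcoset g A).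
Proof.
move=> [f ->]; exists (g * f)%g; rewrite /lcoset; apply/seteqP; split.
- by move=> _ [_ [h Hh <-] <-]; exists h => //; rewrite mulgA.
- by move=> _ [h Hh <-]; exists (f * h)%g; [exists h | rewrite mulgA].
Qed.

Definition coset_shift (G : groupType) (H : set G) (g : G) (a : coset_space H) :
  coset_space H :=
  exist _ (lcoset g (proj1_sig a)) (lcoset_left_cosets g (proj2_sig a)).

Definition bshift (G : groupType) (H : set G) (K : Type) (g : G)
    (x : coset_space H -> K) : coset_space H -> K :=
  fun a => x (coset_shift (g^-1)%g a).

Definition cylinders (I : Type) d (K : measurableType d) : set (set (I -> K)) :=
  [set S | exists (i : I) (A : set K), measurable A /\ S = [set x | A (x i)]].

Arguments cylinders I {d} K.

Definition prod_space (I : Type) d (K : measurableType d) :=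
  g_sigma_algebraType (cylinders I K).
Arguments prod_space I {d} K.

(** [P] is the product measure kappa^I : it gives every finite-dimensional
    measurable rectangle the product of the kappa-measures of its sides
    (this determines P uniquely on the product sigma-algebra). *)
Definition is_product_measure (R : realType) (I : Type) d (K : measurableType d)
    (kappa : probability K R) (P : probability (prod_space I K) R) : Prop :=
  forall (n : nat) (j : 'I_n -> I) (A : 'I_n -> set K),
    injective j -> (forall k, measurable (A k)) ->
    P [set x | forall k, A k (x (j k))] = (\prod_(k < n) kappa (A k))%E.

(** K is standard Borel: Borel-isomorphic to a Borel subset of the reals
    (Kuratowski's characterization of standard Borel spaces). *)
Definition standard_borel (R : realType) d (K : measurableType d) : Prop :=
  exists (B : set R) (f : K -> R) (h : R -> K),
    [/\ measurable B, measurable_fun setT f, measurable_fun B h &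
        [/\ (forall x, B (f x)), (forall x, h (f x) = x) &
             (forall y, B y -> f (h y) = y)]].

Definition nontrivial_prob (R : realType) d (K : measurableType d)
    (kappa : probability K R) : Prop :=
  ~ (exists k : K, kappa [set k] = 1%E).

From HB Require Import structures.
From mathcomp Require Import all_boot all_order all_algebra.
From mathcomp Require Import all_classical all_reals all_analysis.
From mathcomp Require Import ring lra.

(* An element h <> 1 fixes the coset fC iff h^f lies in C. If both h^f0
   and h^f lie in C then, C having prime order, each generates C, so f0^-1 f
   normalizes C: all cosets fixed by h lie in a single coset of N(C). As
   G/N(C) is infinite, h moves infinitely many points of G/C, and for every n
   we can choose moved points a_1, ..., a_n such that the 2n points a_i,
   h a_i are distinct.
   Since K is standard and kappa is not a point mass, some measurable A has
   0 < kappa(A) < 1: otherwise dyadic intervals of full measure would shrink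
   to an atom of full measure. A configuration x fixed by h satisfies
   x(a_i) \in A <-> x(h a_i) \in A for all i, an event of probability r^n by
   independence, where r = q^2 + (1-q)^2 < 1 and q = kappa(A). *)

Set Implicit Arguments.
Unset Strict Implicit.
Unset Printing Implicit Defensive.

Import Order.TTheory GRing.Theory Num.Theory.
Local Open Scope classical_set_scope.

Lemma subset1_finite_set T (A : set T) : is_subset1 A -> finite_set A.
Proof.
move=> A1; have [[x Ax]|A0] := pselect (A !=set0).
  by apply: (sub_finite_set _ (finite_set1 x)) => y Ay; exact: A1.
by rewrite (_ : A = set0) //; apply/seteqP; split => // y Ay; apply: A0; exists y.
Qed.

Section PrimeCyclicCosets.
Variable G : groupType.
Local Open Scope group_scope.

Definition powers (c : G) : set G := [set c ^+ n | n in [set: nat]].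

Lemma expg_modn (c : G) m n : c ^+ m = 1 -> c ^+ n = c ^+ (n %% m).
Proof.
by move=> cm; rewrite {1}(divn_eq n m) expgnDr mulnC expgnA cm expg1n mul1g.
Qed.

Lemma powers_injective_order (c : G) m :
  ~ (exists2 k, (0 < k < m)%N & c ^+ k = 1) -> {in `I_m &, injective (fun n => c ^+ n)}.
Proof.
move=> no_order i j; rewrite !inE /=.
wlog ij : i j / (i <= j)%N.
  move=> W im jm cij; case: (leqP i j) => [|/ltnW] h; first exact: W.
  by apply/esym/W.
move=> _ jm cij; apply/eqP; rewrite eqn_leq ij leqNgt /=.
apply/negP => ji; apply: no_order; exists (j - i); last by rewrite expgnFr // cij mulgV.
by rewrite subn_gt0 ji /= (leq_ltn_trans (leq_subr _ _) jm).
Qed.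

Lemma powers_card_order (c : G) p : (powers c #= `I_p)%card ->
  exists2 m, (0 < m)%N & c ^+ m = 1.
Proof.
move=> cp; apply: contrapT => no_order.
have /inj_card_eq : {in `I_p.+1 &, injective (fun n => c ^+ n)}.
  by apply: powers_injective_order => -[k /andP[k0 _] ck]; apply: no_order; exists k.
rewrite card_eq_le => /andP[_ /card_le_trans le_image].
have sub : (fun n => c ^+ n) @` `I_p.+1 `<=` powers c by move=> _ [n _ <-]; exists n.
by have := le_image _ _ (subset_card_le sub); rewrite (card_le_eqr cp) card_le_II ltnn.
Qed.

Lemma powers_card_expg (c : G) p : (powers c #= `I_p)%card -> c ^+ p = 1.
Proof.
move=> cp; have ex : exists m, (0 < m)%N && (c ^+ m == 1).
  by have [m m0 cm] := powers_card_order cp; exists m; rewrite m0 cm eqxx.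
case: (ex_minnP ex) => m /andP[m0 /eqP cm] min_m.
have powersE : powers c = (fun n => c ^+ n) @` `I_m.
  apply/seteqP; split => _ [n _ <-]; last by exists n.
  by exists (n %% m); [rewrite /= ltn_mod | rewrite -expg_modn].
have /inj_card_eq : {in `I_m &, injective (fun n => c ^+ n)}.
  apply: powers_injective_order => -[k /andP[k0 km] /eqP ck].
  by have := min_m k; rewrite k0 ck leqNgt km => /(_ isT).
by rewrite -powersE (card_eql cp) => /card_eq_II ->.
Qed.

Lemma powers_prime_generator (c0 c : G) p : prime p -> (powers c0 #= `I_p)%card ->
  powers c0 c -> c <> 1 -> powers c0 = powers c.
Proof.
move=> p_pr /powers_card_expg c0p [k _ <-] c1.
have k_gt0 : (0 < k)%N by rewrite lt0n; apply: contra_notN c1 => /eqP ->.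
have cop : coprime k p.
  rewrite coprime_sym prime_coprime //; apply: contra_notN c1 => /dvdnP[q ->].
  by rewrite mulnC expgnA c0p expg1n.
case: (egcdnP p k_gt0) => u v; rewrite (eqP cop) => Bezout _.
have c0E : (c0 ^+ k) ^+ u = c0.
  by rewrite -expgnA mulnC Bezout expgnDr (mulnC v) expgnA c0p expg1n mul1g.
apply/seteqP; split => _ [n _ <-].
  by exists (u * n)%N => //; rewrite expgnA c0E.
by exists (k * n)%N => //; rewrite expgnA.
Qed.

Lemma lcosetM (a b : G) X : lcoset (a * b) X = lcoset a (lcoset b X).
Proof.
apply/seteqP; split.
  by move=> _ [x Xx <-]; exists (b * x); [exists x | rewrite mulgA].
by move=> _ [_ [x Xx <-] <-]; exists x => //; rewrite mulgA.
Qed.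

Lemma lcoset1 X : lcoset (1 : G) X = X.
Proof.
apply/seteqP; split; first by move=> _ [x Xx <-]; rewrite mul1g.
by move=> x Xx; exists x => //; rewrite mul1g.
Qed.

Lemma coset_shiftK (H : set G) h : cancel (@coset_shift G H h) (coset_shift h^-1).
Proof. by move=> [X HX]; apply: eq_exist; rewrite /= -lcosetM mulVg lcoset1. Qed.

Lemma lcoset_id (H : set G) k : is_subgroup H -> H k -> lcoset k H = H.
Proof.
case=> _ HM HV Hk; apply/seteqP; split; first by move=> _ [x Hx <-]; exact: HM.
by move=> x Hx; exists (k^-1 * x); [(apply: HM => //; exact: HV) | rewrite mulVKg].
Qed.

Lemma conjsetM (a b : G) X : conjset (a * b) X = conjset a (conjset b X).
Proof.
apply/seteqP; split.
  by move=> _ [x Xx <-]; exists (b * x * b^-1); [exists x | rewrite invgM !mulgA].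
by move=> _ [_ [x Xx <-] <-]; exists x => //; rewrite invgM !mulgA.
Qed.

Lemma conjset1 X : conjset (1 : G) X = X.
Proof.
apply/seteqP; split; first by move=> _ [x Xx <-]; rewrite invg1 mulg1 mul1g.
by move=> x Xx; exists x => //; rewrite invg1 mulg1 mul1g.
Qed.

Lemma conjset_powers k c : conjset k (powers c) = powers (k * c * k^-1).
Proof.
have conjE x : k * x * k^-1 = x ^ k^-1 by rewrite conjgE invgK mulgA.
apply/seteqP; split.
  by move=> _ [_ [n _ <-] <-]; exists n => //; rewrite !conjE conjXg.
by move=> _ [n _ <-]; exists (c ^+ n); [exists n | rewrite !conjE conjXg].
Qed.

Lemma normalizer_subgroup (C : set G) : is_subgroup (normalizer C).
Proof.
split=> [|x y Nx Ny|x Nx]; rewrite /normalizer /=.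
- exact: conjset1.
- by rewrite conjsetM Ny Nx.
- by rewrite -{1}Nx -conjsetM mulVg conjset1.
Qed.

Lemma sub_normalizer (C : set G) : is_subgroup C -> C `<=` normalizer C.
Proof.
case=> _ CM CV c Cc; rewrite /normalizer /=; apply/seteqP; split.
  by move=> _ [x Cx <-]; apply: CM (CM _ _ Cc Cx) (CV _ Cc).
move=> x Cx; exists (c^-1 * x * c); first exact: CM (CM _ _ (CV _ Cc) Cx) Cc.
by rewrite !mulgA mulgV mul1g mulgK.
Qed.

Definition lcoset_pt (H : set G) (f : G) : coset_space H :=
  exist _ (lcoset f H) (ex_intro _ f erefl).

Lemma coset_shift_fixed (C : set G) h f : is_subgroup C ->
  coset_shift h (lcoset_pt C f) = lcoset_pt C f -> C (h ^ f).
Proof.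
case=> C1 _ _ /(congr1 sval) /= fixed.
have : lcoset h (lcoset f C) (h * f) by exists f => //; exists 1; rewrite ?mulg1.
by rewrite fixed => -[c Cc hfE]; rewrite conjgE -hfE mulKg.
Qed.

Lemma bigcup_lcoset (C N : set G) f : is_subgroup N -> C `<=` N -> C 1 ->
  \bigcup_(x in lcoset f C) lcoset x N = lcoset f N.
Proof.
move=> Nsub CN C1; apply/seteqP; split.
  by move=> y [_ [c Cc <-]]; rewrite lcosetM (lcoset_id Nsub (CN _ Cc)).
by move=> y fNy; exists f => //; exists 1; rewrite ?mulg1.
Qed.

Section GeneratedByEachElement.
Variable C : set G.
Hypothesis C_gen : forall c, C c -> c <> 1 -> C = powers c.

Lemma normalizer_conjg c k : C c -> c <> 1 -> C (c ^ k) -> normalizer C k.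
Proof.
move=> Cc c1 Cck; have ck1 : c ^ k <> 1 by apply/eqP; rewrite conjg_eq1; apply/eqP.
rewrite /normalizer /= {1}(C_gen Cck ck1) conjset_powers conjgE mulVKg mulgK.
by rewrite -(C_gen Cc c1).
Qed.

Lemma lcoset_conjg_normalizer h f0 f : h <> 1 -> C (h ^ f0) -> C (h ^ f) ->
  lcoset f (normalizer C) = lcoset f0 (normalizer C).
Proof.
move=> h1 Cf0 Cf.
have Nk : normalizer C (f0^-1 * f).
  apply: (normalizer_conjg Cf0); first by apply/eqP; rewrite conjg_eq1; apply/eqP.
  by rewrite -conjgM mulVKg.
have -> : f = f0 * (f0^-1 * f) by rewrite mulVKg.
by rewrite lcosetM (lcoset_id (normalizer_subgroup C) Nk).
Qed.

Lemma infinite_nonfixed_cosets h : is_subgroup C -> h <> 1 ->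
  infinite_set (left_cosets (normalizer C)) ->
  infinite_set [set a : coset_space C | coset_shift h a <> a].
Proof.
move=> Csub h1 infN fin_moved; apply: infN.
set N := normalizer C.
have fin_fixers : finite_set [set lcoset f N | f in [set f | C (h ^ f)]].
  apply: subset1_finite_set => _ _ [f0 Cf0 <-] [f Cf <-].
  exact: lcoset_conjg_normalizer h1 Cf Cf0.
have fin_movers : finite_set [set lcoset f N | f in [set f | ~ C (h ^ f)]].
  (* a |-> a N(C), the projection G/C -> G/N(C) *)
  apply: sub_finite_set (finite_image (fun a => \bigcup_(x in sval a) lcoset x N) fin_moved).
  move=> _ [f nCf <-]; exists (lcoset_pt C f); first by move/(coset_shift_fixed Csub).
  apply: bigcup_lcoset; [exact: normalizer_subgroup | exact: sub_normalizer |].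
  by case: Csub.
have := conj fin_fixers fin_movers; rewrite -finite_setU; apply: sub_finite_set.
by move=> _ [f ->]; have [Cf|nCf] := pselect (C (h ^ f)); [left|right]; exists f.
Qed.

End GeneratedByEachElement.

End PrimeCyclicCosets.

Local Open Scope ring_scope.

Lemma exists_displaced_seq (I : Type) (sigma : I -> I) (S : set I) :
  injective sigma -> infinite_set S -> (forall s, S s -> sigma s <> s) ->
  forall n, exists a : nat -> I, forall i j, (i < n)%N -> (j < n)%N ->
    (a i = a j -> i = j) /\ a i <> sigma (a j).
Proof.
move=> sigma_inj S_inf S_moved; elim=> [|n [a aP]].
  by have [s0 _] := infinite_setN0 S_inf; exists (fun=> s0).
pose used := a @` `I_n `|` sigma @` (a @` `I_n).
have used_fin : finite_set used.
  by rewrite finite_setU; split; do ?apply: finite_image; exact: finite_II.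
have forbid_fin : finite_set (used `|` sigma @^-1` used).
  rewrite finite_setU; split => //; apply: finite_preimage => // x y _ _; exact: sigma_inj.
have [s [Ss /not_orP[s_unused ss_unused]]] :=
  infinite_setN0 (infinite_setD S_inf forbid_fin).
exists (fun k => if k == n then s else a k) => i j.
rewrite !ltnS [(i <= n)%N]leq_eqVlt [(j <= n)%N]leq_eqVlt.
case/orP=> [/eqP ->|i_n] /orP[/eqP ->|j_n]; rewrite ?eqxx ?(ltn_eqF i_n) ?(ltn_eqF j_n).
- by split => //; apply/nesym/S_moved.
- split=> e; case: s_unused; first by left; exists j.
  by right; rewrite e; exists (a j) => //; exists j.
- by split=> e; [case: s_unused; left | case: ss_unused; left; rewrite -e]; exists i.
- exact: aP.
Qed.

Lemma le_expr_le0 (R : realType) (q r : R) : 0 <= r < 1 ->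
  (forall n, q <= r ^+ n) -> q <= 0.
Proof.
move=> /andP[r_ge0 r_lt1] le_q; have := @cvg_expr R r; rewrite ger0_norm // => /(_ r_lt1).
by move/cvgr_to_ge; apply; exact: nearW.
Qed.

Lemma negligible_geometric d (T : measurableType d) (R : realType)
    (mu : {measure set T -> \bar R}) (E : nat -> set T) (X : set T) (r : R) :
  0 <= r < 1 -> (forall n, measurable (E n)) -> (forall n, mu (E n) = (r ^+ n)%:E) ->
  X `<=` \bigcap_n E n -> mu.-negligible X.
Proof.
move=> r01 mE muE XE; have mB : measurable (\bigcap_n E n) by exact: bigcapT_measurable.
exists (\bigcap_n E n); split => //.
have le_r n : (mu (\bigcap_n E n) <= (r ^+ n)%:E)%E.
  by rewrite -muE; apply: le_measure; rewrite ?inE //; exact: bigcap_inf.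
have v_ge0 := measure_ge0 mu (\bigcap_n E n).
have /fineK vE : mu (\bigcap_n E n) \is a fin_num.
  by rewrite ge0_fin_numE // (le_lt_trans (le_r 0)) // ltry.
rewrite -vE; congr EFin; apply/eqP; rewrite eq_le fine_ge0 // andbT.
by apply: (le_expr_le0 r01) => n; rewrite -lee_fin vE.
Qed.

Definition fcons T m (t : T) (f : 'I_m -> T) : 'I_m.+1 -> T :=
  fun k => if unlift ord0 k is Some k' then f k' else t.

Lemma fcons0 T m (t : T) (f : 'I_m -> T) : fcons t f ord0 = t.
Proof. by rewrite /fcons unlift_none. Qed.

Lemma fconsS T m (t : T) (f : 'I_m -> T) k : fcons t f (lift ord0 k) = f k.
Proof. by rewrite /fcons liftK. Qed.

Lemma fcons_forall T m (Q : T -> Prop) (t : T) (f : 'I_m -> T) :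
  Q t -> (forall k, Q (f k)) -> forall k, Q (fcons t f k).
Proof. by move=> Qt Qf k; case: (unliftP ord0 k) => [k'|] ->; rewrite ?fcons0 ?fconsS. Qed.

Lemma fcons_inj T m (t : T) (f : 'I_m -> T) :
  injective f -> (forall k, f k <> t) -> injective (fcons t f).
Proof.
move=> f_inj ft k1 k2.
case: (unliftP ord0 k1) => [k1'|] ->; case: (unliftP ord0 k2) => [k2'|] ->;
  rewrite ?fcons0 ?fconsS //; [by move=> /f_inj -> | by move=> /ft | by move=> /esym /ft].
Qed.

Lemma fcons_injr T m (t : T) (f : 'I_m -> T) : injective (fcons t f) -> injective f.
Proof. by move=> tf_inj k1 k2 e; apply/(@lift_inj _ ord0)/tf_inj; rewrite !fconsS. Qed.

Definition agree_prob (R : realType) (q : R) : R := q ^+ 2 + (1 - q) ^+ 2.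

Section ProductMeasure.
Variables (R : realType) (d : measure_display) (K : measurableType d).
Variables (kappa : probability K R) (I : Type).
Variable P : probability (prod_space I K) R.
Hypothesis P_product : is_product_measure kappa P.

Definition cyl (i : I) (A : set K) : set (prod_space I K) := [set x | A (x i)].

Definition rect m (j : 'I_m -> I) (B : 'I_m -> set K) : set (prod_space I K) :=
  [set x | forall k, B k (x (j k))].

Lemma measurable_fcons m (B : 'I_m -> set K) A : measurable A ->
  (forall k, measurable (B k)) -> forall k, measurable (fcons A B k).
Proof. exact: fcons_forall. Qed.

Lemma measurable_cyl i A : measurable A -> measurable (cyl i A).
Proof. by move=> mA; apply: sub_sigma_algebra; exists i, A. Qed.

Lemma rect0 (j : 'I_0 -> I) B : rect j B = setT.
Proof. by apply/seteqP; split => // x _ []. Qed.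

Lemma rect_fcons m (j : 'I_m -> I) B i A :
  rect (fcons i j) (fcons A B) = cyl i A `&` rect j B.
Proof.
apply/seteqP; split => x.
  by move=> xR; split; [have := xR ord0 | move=> k; have := xR (lift ord0 k)];
    rewrite ?fcons0 ?fconsS.
by move=> [xA xR] k; case: (unliftP ord0 k) => [k'|] ->; rewrite ?fcons0 ?fconsS.
Qed.

Lemma measurable_rect m (j : 'I_m -> I) B : (forall k, measurable (B k)) ->
  measurable (rect j B).
Proof.
move=> mB; have -> : rect j B = \bigcap_(k in [set: 'I_m]) cyl (j k) (B k).
  by apply/seteqP; split => x /= xR k; [move=> _ |]; apply: xR.
by apply: fin_bigcap_measurable => [|k _]; [exact: finite_finset | exact: measurable_cyl].
Qed.

Lemma measure_rect_fcons m (j : 'I_m -> I) B i A : injective (fcons i j) ->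
  measurable A -> (forall k, measurable (B k)) ->
  P (rect (fcons i j) (fcons A B)) = (kappa A * P (rect j B))%E.
Proof.
move=> ij_inj mA mB; rewrite !P_product //; last first.
- exact: measurable_fcons.
- exact: fcons_injr ij_inj.
by rewrite big_ord_recl fcons0; under eq_bigr do rewrite fconsS.
Qed.

Section Agreement.
Variables (a b : nat -> I) (A : set K).
Hypothesis mA : measurable A.

Definition agree n : set (prod_space I K) :=
  [set x | forall i, (i < n)%N -> (A (x (a i)) <-> A (x (b i)))].

Lemma agree0 : agree 0 = setT.
Proof. by apply/seteqP; split => // x _ i. Qed.

Lemma agreeS n : agree n.+1 = agree n `&`
  ((cyl (b n) A `&` cyl (a n) A) `|` (cyl (b n) (~` A) `&` cyl (a n) (~` A))).
Proof.
apply/seteqP; split => x.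
  move=> xE; split=> [i /ltnW/xE //|]; rewrite /cyl /=.
  have [xa xb] := xE n (ltnSn n).
  have [Aa|nAa] := pselect (A (x (a n))); [left | right]; split => //; first exact: xa.
  by move=> /xb.
move=> [xE xn] i; rewrite ltnS leq_eqVlt => /orP[/eqP -> | /xE //].
by case: xn => -[xb xa]; split => // /[dup] /xa.
Qed.

Lemma measurable_agree n : measurable (agree n).
Proof.
elim: n => [|n IH]; first by rewrite agree0.
rewrite agreeS; apply: measurableI => //.
by apply: measurableU; apply: measurableI; apply: measurable_cyl => //; exact: measurableC.
Qed.

Definition separated n := forall i i', (i < n)%N -> (i' < n)%N ->
  [/\ a i = a i' -> i = i', b i = b i' -> i = i' & a i <> b i'].

Definition avoids m (j : 'I_m -> I) n :=
  forall k i, (i < n)%N -> j k <> a i /\ j k <> b i.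

Lemma separated_fcons_inj n m (j : 'I_m -> I) : separated n.+1 ->
  injective j -> avoids j n.+1 -> injective (fcons (b n) (fcons (a n) j)).
Proof.
move=> sep j_inj j_avoid; have [_ _ anbn] := sep n n (ltnSn n) (ltnSn n).
apply: fcons_inj; first by apply: fcons_inj => // k; case: (j_avoid k n (ltnSn n)).
apply: (fcons_forall (Q := fun z => z <> b n)) => // k.
by case: (j_avoid k n (ltnSn n)).
Qed.

Lemma separated_fcons_avoids n m (j : 'I_m -> I) : separated n.+1 ->
  avoids j n.+1 -> avoids (fcons (b n) (fcons (a n) j)) n.
Proof.
move=> sep j_avoid k i lt_in; have lt_in1 := ltnW lt_in.
have [ai _ aibn] := sep i n lt_in1 (ltnSn n).
have [_ bn anbi] := sep n i (ltnSn n) lt_in1.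
have ni : n <> i by move=> e; rewrite e ltnn in lt_in.
split.
- apply: (fcons_forall (Q := fun z => z <> a i)); first exact/nesym.
  apply: (fcons_forall (Q := fun z => z <> a i)) => [/esym/ai/esym/ni //|k'].
  by case: (j_avoid k' i lt_in1).
- apply: (fcons_forall (Q := fun z => z <> b i)); first by move=> /bn.
  apply: (fcons_forall (Q := fun z => z <> b i)) => // k'.
  by case: (j_avoid k' i lt_in1).
Qed.

Lemma measure_agree_rect n m (j : 'I_m -> I) B : separated n -> injective j ->
  (forall k, measurable (B k)) -> avoids j n ->
  P (agree n `&` rect j B) = ((agree_prob (fine (kappa A)) ^+ n)%:E * P (rect j B))%E.
Proof.
set q := fine (kappa A).
have kA : kappa A = q%:E by rewrite fineK // fin_num_measure.
have kAc : kappa (~` A) = (1 - q)%:E by rewrite probability_setC // kA.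
elim: n m j B => [|n IH] m j B sep j_inj mB j_avoid.
  by rewrite agree0 setTI expr0 mul1e.
have sep' : separated n by move=> i i' ii i'i; apply: sep; exact: ltnW.
have j'_inj := separated_fcons_inj sep j_inj j_avoid.
have j'_avoid := separated_fcons_avoids sep j_avoid.
have mAB A' : measurable A' -> forall k, measurable (fcons A' (fcons A' B) k).
  by move=> mA'; do 2 apply: measurable_fcons => //.
rewrite agreeS -setIA setIUl setIUr -!setIA -!rect_fcons measureU; last 3 first.
- apply: measurableI; first exact: measurable_agree.
  by apply: measurable_rect; exact: mAB.
- apply: measurableI; first exact: measurable_agree.
  by apply: measurable_rect; apply: mAB; exact: measurableC.
- apply/seteqP; split => // x; rewrite !rect_fcons.
  by move=> [[_ [xA _]] [_ [nxA _]]]; exact: nxA xA.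
set r := agree_prob q.
set j' := fcons (b n) (fcons (a n) j).
transitivity ((r ^+ n)%:E * P (rect j' (fcons A (fcons A B))) +
              (r ^+ n)%:E * P (rect j' (fcons (~` A) (fcons (~` A) B))))%E.
  by congr (_ + _)%E; apply: IH => //; apply: mAB => //; exact: measurableC.
have mAc : measurable (~` A) by exact: measurableC.
have a_inj := fcons_injr j'_inj.
rewrite !measure_rect_fcons //; try exact: measurable_fcons.
have mR : measurable (rect j B) by exact: measurable_rect.
rewrite kA kAc -(fineK (fin_num_measure P _ mR)) -!EFinM -EFinD exprS /r /agree_prob.
by congr EFin; ring.
Qed.

Lemma measure_agree n : separated n ->
  P (agree n) = (agree_prob (fine (kappa A)) ^+ n)%:E.
Proof.
move=> sep; have := measure_agree_rect (j := fun _ : 'I_0 => a 0) (B := fun=> setT) sep.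
by rewrite rect0 setIT probability_setT mule1; apply => // [] [].
Qed.

End Agreement.

Lemma negligible_fixed_points (sigma : I -> I) (A : set K) : injective sigma ->
  infinite_set [set i | sigma i <> i] -> measurable A ->
  kappa A <> 0%E -> kappa A <> 1%E ->
  P.-negligible [set x | (fun i => x (sigma i)) = x].
Proof.
move=> sigma_inj moved_inf mA kA0 kA1.
have [a aP] := choice (exists_displaced_seq sigma_inj moved_inf (fun _ => id)).
set q := fine (kappa A); have kAq : kappa A = q%:E by rewrite fineK // fin_num_measure.
have q_gt0 : 0 < q.
  rewrite lt_def fine_ge0 ?measure_ge0 // andbT.
  by apply/eqP => q0; apply: kA0; rewrite kAq q0.
have q_lt1 : q < 1.
  rewrite lt_def -lee_fin -kAq probability_le1 // andbT.
  by apply/eqP => q1; apply: kA1; rewrite kAq q1.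
apply: (negligible_geometric (r := agree_prob q) _
  (fun n => measurable_agree (a n) (sigma \o a n) mA n)).
- by apply/andP; split; rewrite /agree_prob; nra.
- move=> n; apply: measure_agree => // i i' lt_in lt_i'n.
  have [ai ai'] := aP n i i' lt_in lt_i'n.
  by split => // /sigma_inj; exact: ai.
- move=> x /= fixed n _ i _.
  by have -> : x (sigma (a n i)) = x (a n i) by rewrite -[in RHS]fixed.
Qed.

End ProductMeasure.

Section DyadicIntervals.
Variable R : realType.

Definition dyadic_itv (n : nat) (z : int) : set R :=
  `[z%:~R / 2 ^+ n, (z + 1)%:~R / 2 ^+ n[%classic.

Lemma dyadic_itvP n z t : dyadic_itv n z t <-> z%:~R <= t * 2 ^+ n < (z + 1)%:~R.
Proof.
have two_n_gt0 : (0 : R) < 2 ^+ n by exact: exprn_gt0.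
by rewrite /dyadic_itv /= in_itv /= ler_pdivrMr // ltr_pdivlMr.
Qed.

Lemma dyadic_itv_floor n t : dyadic_itv n (Num.floor (t * 2 ^+ n)) t.
Proof. exact/dyadic_itvP/floor_itv. Qed.

Lemma dyadic_itv_dist n z x y : dyadic_itv n z x -> dyadic_itv n z y ->
  `|x - y| <= 2^-1 ^+ n.
Proof.
move=> /dyadic_itvP/andP[x1 x2] /dyadic_itvP/andP[y1 y2].
have two_n_gt0 : (0 : R) < 2 ^+ n by exact: exprn_gt0.
rewrite exprVn -[X in _ <= X]mul1r ler_pdivlMr // -[X in _ * X](gtr0_norm two_n_gt0).
rewrite -normrM mulrBl ler_norml; move: x2 y2; rewrite intrD => x2 y2.
by apply/andP; split; lra.
Qed.

Lemma exists_measure_neq01 d (K : measurableType d) (kappa : probability K R)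
    (f : K -> R) :
  measurable_fun setT f -> injective f -> nontrivial_prob kappa ->
  exists2 A, measurable A & kappa A <> 0%E /\ kappa A <> 1%E.
Proof.
move=> mf f_inj kappa_nt; apply: contrapT => no_mid.
have kappa01 A : measurable A -> kappa A <> 1%E -> kappa A = 0%E.
  by move=> mA kA1; apply: contrapT => kA0; apply: no_mid; exists A.
pose D n z := f @^-1` dyadic_itv n z.
have mD n z : measurable (D n z).
  by rewrite -[D n z]setTI; apply: mf => //; exact: measurable_itv.
have full n : exists z, kappa (D n z) = 1%E.
  apply: contrapT => /forallNP none.
  have : kappa.-negligible (\bigcup_k (D n (Posz k) `|` D n (Negz k))).
    apply: negligible_bigcup => k.
    by apply: negligibleU; apply/negligibleP => //; exact: kappa01.
  rewrite (_ : \bigcup_k _ = setT) => [/(negligibleP _ measurableT) kT0|].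
    by have : kappa setT = 0%E := kT0; rewrite probability_setT => /eqP; rewrite onee_eq0.
  apply/seteqP; split => // t _; case E: (Num.floor (f t * 2 ^+ n)) => [k|k].
    by exists k => //; left; rewrite /D /= -E; exact: dyadic_itv_floor.
  by exists k => //; right; rewrite /D /= -E; exact: dyadic_itv_floor.
have [z zP] := choice full.
pose X := \bigcap_n D n (z n).
have mX : measurable X by exact: bigcapT_measurable.
have kX : kappa X = 1%E.
  have : kappa.-negligible (~` X).
    rewrite setC_bigcap; apply: negligible_bigcup => n.
    apply/negligibleP; first exact: measurableC.
    by have := probability_setC kappa (mD n (z n)); rewrite zP subee.
  move=> /(negligibleP _ (measurableC mX)) kXc.
  have : kappa (~` X) = 0%E := kXc; rewrite probability_setC //.
  rewrite -(fineK (fin_num_measure kappa _ mX)) -EFinB => -[] /eqP.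
  by rewrite subr_eq0 => /eqP <-.
have [x Xx] : X !=set0.
  by apply/set0P; apply: contra_eqN kX => /eqP ->; rewrite measure0 eq_sym onee_eq0.
apply: kappa_nt; exists x; rewrite -kX; congr (kappa _).
apply/seteqP; split=> [y -> //|y Xy].
apply/esym/f_inj/eqP; rewrite -subr_eq0 -normr_le0.
apply: (@le_expr_le0 _ _ 2^-1); first by apply/andP; split; lra.
by move=> n; exact: dyadic_itv_dist (Xx n I) (Xy n I).
Qed.

End DyadicIntervals.

Local Close Scope ring_scope.
Unset Implicit Arguments.

Theorem lemma5p1 (G : groupType) (C : set G)
  (G_countable : countable [set: G]) (G_infinite : infinite_set [set: G])
  (C_subgroup : is_subgroup C)
  (C_cyclic : exists c : G, C = [set (c ^+ n)%g | n in [set: nat]])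
  (C_prime : exists p : nat, prime p /\ (C #= `I_p)%card)
  (R : realType) (d : measure_display) (K : measurableType d)
  (kappa : probability K R)
  (K_standard : standard_borel R K) (kappa_nontrivial : nontrivial_prob kappa)
  (P : probability (prod_space (coset_space C) K) R)
  (P_product : is_product_measure kappa P)
  (index_infinite : infinite_set (left_cosets (normalizer C))) :
  forall g : G, g <> 1%g ->
    P.-negligible [set x | bshift g x = x].
Proof.
move=> g g1; case: C_cyclic => c0 C_powers; case: C_prime => p [p_pr C_card].
have C_gen c : C c -> c <> 1%g -> C = powers c.
  rewrite C_powers in C_card *; exact: powers_prime_generator p_pr C_card.
have g'1 : g^-1%g <> 1%g by move=> /eqP; rewrite invg_eq1 => /eqP.
have [B [f [h [_ mf _ [_ fK _]]]]] := K_standard.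
have [A mA [kA0 kA1]] := exists_measure_neq01 mf (can_inj fK) kappa_nontrivial.
have shift_inj : injective (@coset_shift G C g^-1) := can_inj (coset_shiftK (H := C) g^-1).
apply: (negligible_fixed_points P_product shift_inj _ mA kA0 kA1).
exact: (infinite_nonfixed_cosets C_gen C_subgroup g'1 index_infinite).
Qed.
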